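(* Let $l:\mathbb{R}\times\mathbb{R}\to\mathbb{R}$ be doubly convex (jointly convex), i.e. $l(\mu u_1+(1-\mu)u_2,\mu v_1+(1-\mu)v_2)\le\mu\,l(u_1,v_1)+(1-\mu)\,l(u_2,v_2)$ for all $u_i,v_i$ and $\mu\in[0,1]$, and let $f:\mathbb{X}\to\mathbb{R}$ be such that all expected $k$-risks below are finite. Then for all integers $1\le k\le k'$, $$r_k(f,\mathcal{D})\ge r_{k'}(f,\mathcal{D}).$$
   Context: Let $\mathcal{D}$ be a probability distribution on $\mathbb{Z}=\mathbb{X}\times\mathbb{Y}$, $\mathbb{Y}\subset\mathbb{R}$. For a finite family $S$ and function $g$, $\hat{E}_S[g(z)]=\frac{1}{|S|}\sum_{z\in S}g(z)$. The expected $k$-risk is $r_k(f,\mathcal{D})=\mathbb{E}_{S\sim\mathcal{D}^k}\big[l(\hat{E}_S[f(x)],\hat{E}_S[y])\big]$ where $S=(z_1,\dots,z_k)$ consists of $k$ i.i.d. draws from $\mathcal{D}$. *)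

From HB Require Import structures.
From mathcomp Require Import all_boot all_order all_algebra.
From mathcomp Require Import all_classical all_reals all_analysis.
Set Implicit Arguments. Unset Strict Implicit. Unset Printing Implicit Defensive.
Import Order.TTheory GRing.Theory Num.Theory.
Local Open Scope classical_set_scope.
Local Open Scope ring_scope.

Definition doubly_convex (R : realType) (l : R -> R -> R) : Prop :=
  forall (u1 u2 v1 v2 mu : R), 0 <= mu <= 1 ->
    l (mu * u1 + (1 - mu) * u2) (mu * v1 + (1 - mu) * v2)
    <= mu * l u1 v1 + (1 - mu) * l u2 v2.

Definition emp_mean (R : realType) (k : nat) (g : nat -> R) : R :=
  (k%:R)^-1 * \sum_(i < k) g i.

Definition mutually_independent (R : realType) (dO : measure_display)
    (Omega : measurableType dO) (P : probability Omega R)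
    (dU : measure_display) (U : measurableType dU) (Z : nat -> Omega -> U) : Prop :=
  forall (s : seq nat) (A : nat -> set U), uniq s ->
    (forall i, i \in s -> measurable (A i)) ->
    P (\big[setI/setT]_(i <- s) (Z i @^-1` A i)) =
    (\prod_(i <- s) P (Z i @^-1` A i))%E.

Definition iid_draws (R : realType) (dO : measure_display)
    (Omega : measurableType dO) (P : probability Omega R)
    (dU : measure_display) (U : measurableType dU) (D : probability U R)
    (Z : nat -> Omega -> U) : Prop :=
  (forall i, measurable_fun setT (Z i)) /\
  (forall i (A : set U), measurable A -> P (Z i @^-1` A) = D A) /\
  mutually_independent P Z.

Definition k_loss (R : realType) (dO : measure_display) (Omega : measurableType dO)
    (dX : measure_display) (X : measurableType dX)
    (Z : nat -> Omega -> (X * R)%type) (l : R -> R -> R) (f : X -> R) (k : nat)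
    : Omega -> R :=
  fun w => l (emp_mean k (fun i => f (Z i w).1)) (emp_mean k (fun i => (Z i w).2)).

(** Expected k-risk r_k(f, D) = E_{S ~ D^k}[ l(\hat E_S[f(x)], \hat E_S[y]) ],
    computed with S = (Z 0, ..., Z (k-1)) for an i.i.d. sequence Z of law D. *)
Definition k_risk (R : realType) (dO : measure_display) (Omega : measurableType dO)
    (P : probability Omega R) (dX : measure_display) (X : measurableType dX)
    (Z : nat -> Omega -> (X * R)%type) (l : R -> R -> R) (f : X -> R) (k : nat)
    : \bar R :=
  'E_P[k_loss Z l f k].

(* Index the K draws cyclically.  Each index lies in exactly k of the K
   windows {j, j+1, ..., j+k-1} (mod K), so both K-sample means are the
   averages over the windows of the k-sample means of the windows.  Jensen's
   inequality for the jointly convex loss therefore bounds the K-loss by the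
   average of the k-losses of the windows.  A window consists of k distinct
   draws of an i.i.d. sequence, so it has the law of the first k draws and its
   expected loss is r_k; taking expectations gives r_K <= r_k. *)

From HB Require Import structures.
From mathcomp Require Import all_boot all_order all_algebra.
From mathcomp Require Import all_classical all_reals all_analysis.
From mathcomp Require Import ring lra measurable_realfun.
Import Order.TTheory GRing.Theory Num.Theory.
Local Open Scope classical_set_scope.
Local Open Scope ring_scope.

Definition box_lower_semicontinuous {R : realType} (l : R -> R -> R) : Prop :=
  forall u v c, c < l u v -> exists2 d : R, 0 < d &
    forall u' v', `|u' - u| < d -> `|v' - v| < d -> c < l u' v'.

Section doubly_convex_loss.
Context {R : realType} {l : R -> R -> R}.
Hypothesis lcvx : doubly_convex l.

Lemma doubly_convex_le_max (u1 u2 v1 v2 mu M u v : R) : 0 <= mu <= 1 ->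
  u = mu * u1 + (1 - mu) * u2 -> v = mu * v1 + (1 - mu) * v2 ->
  l u1 v1 <= M -> l u2 v2 <= M -> l u v <= M.
Proof.
move=> /[dup] mu01 /andP[mu0 mu1] -> -> le1 le2.
by apply: le_trans (lcvx _ _ _ _ _ mu01) _; nra.
Qed.

(* A doubly convex l is bounded on the unit square around (u, v) by its values
   at the corners; rescaling and midpoint convexity turn this into a lower
   bound near (u, v), so l is lower semicontinuous and its losses measurable. *)
Definition corner_max (u v : R) : R :=
  Num.max (Num.max (l (u + 1) (v + 1)) (l (u + 1) (v - 1)))
          (Num.max (l (u - 1) (v + 1)) (l (u - 1) (v - 1))).

Lemma le_corner_max (u v s t : R) : `|s| <= 1 -> `|t| <= 1 ->
  l (u + s) (v + t) <= corner_max u v.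
Proof.
rewrite !ler_norml => /andP[s1 s2] /andP[t1 t2].
have nu01 : 0 <= (1 + s) / 2 <= 1 by apply/andP; split; lra.
have mu01 : 0 <= (1 + t) / 2 <= 1 by apply/andP; split; lra.
have [c1 c2 c3 c4] : [/\ l (u + 1) (v + 1) <= corner_max u v,
    l (u + 1) (v - 1) <= corner_max u v, l (u - 1) (v + 1) <= corner_max u v
  & l (u - 1) (v - 1) <= corner_max u v].
  by rewrite /corner_max !le_max !lexx /= ?orbT.
apply: (@doubly_convex_le_max (u + s) (u + s) (v + 1) (v - 1) _ _ _ _ mu01);
  [by field | by field | |].
- by apply: (@doubly_convex_le_max (u + 1) (u - 1) (v + 1) (v + 1) _ _ _ _ nu01);
    [field | field | |].
- by apply: (@doubly_convex_le_max (u + 1) (u - 1) (v - 1) (v - 1) _ _ _ _ nu01);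
    [field | field | |].
Qed.

Lemma le_scaled_corner_max (u v s t r : R) : 0 < r <= 1 -> `|s| <= r -> `|t| <= r ->
  l (u + s) (v + t) <= l u v + r * (corner_max u v - l u v).
Proof.
move=> /andP[r0 r1] sr tr.
have r01 : 0 <= r <= 1 by rewrite r1 ltW.
have r_neq0 : r != 0 by rewrite gt_eqF.
have scaled x : `|x| <= r -> `|x / r| <= 1.
  by move=> xr; rewrite normrM normfV (gtr0_norm r0) ler_pdivrMr // mul1r.
have := lcvx (u + s / r) u (v + t / r) v r r01.
have -> : r * (u + s / r) + (1 - r) * u = u + s by field.
have -> : r * (v + t / r) + (1 - r) * v = v + t by field.
move=> /le_trans; apply.
have := @le_corner_max u v (s / r) (t / r) (scaled s sr) (scaled t tr).
move=> /(ler_wpM2l (ltW r0)); rewrite mulrBl mulrBr mul1r; lra.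
Qed.

Lemma ge_scaled_corner_max (u v s t r : R) : 0 < r <= 1 -> `|s| <= r -> `|t| <= r ->
  l u v - r * (corner_max u v - l u v) <= l (u + s) (v + t).
Proof.
move=> r01 sr tr.
have := le_scaled_corner_max u v (- s) (- t) r r01.
rewrite !normrN => /(_ sr tr) opposite.
have half : 0 <= (2^-1 : R) <= 1 by apply/andP; split; lra.
have := lcvx (u + s) (u - s) (v + t) (v - t) 2^-1 half.
have -> : 2^-1 * (u + s) + (1 - 2^-1) * (u - s) = u by field.
have -> : 2^-1 * (v + t) + (1 - 2^-1) * (v - t) = v by field.
lra.
Qed.

Lemma doubly_convex_lower_semicontinuous : box_lower_semicontinuous l.
Proof.
move=> u v c cl.
set C := corner_max u v - l u v.
have C0 : 0 <= C.
  by have := @le_corner_max u v 0 0; rewrite !addr0 normr0 ler01 subr_ge0; apply.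
set d := Num.min 1 ((l u v - c) / (C + 1)).
have d0 : 0 < d by rewrite lt_min ltr01 divr_gt0 //; lra.
have d1 : d <= 1 by rewrite ge_min lexx.
have dC : d * C < l u v - c.
  have : d <= (l u v - c) / (C + 1) by rewrite ge_min lexx orbT.
  rewrite ler_pdivlMr ?mulrDr ?mulr1; lra.
exists d => // u' v' uu' vv'.
have := ge_scaled_corner_max u v (u' - u) (v' - v) d.
rewrite !subrKC => /(_ _ (ltW uu') (ltW vv')).
rewrite d0 d1 => /(_ isT); rewrite -/C; lra.
Qed.

Lemma doubly_convex_emp_mean k (a b : nat -> R) :
  l (emp_mean k.+1 a) (emp_mean k.+1 b) <= emp_mean k.+1 (fun j => l (a j) (b j)).
Proof.
elim: k => [|k IH]; first by rewrite /emp_mean !big_ord1 invr1 !mul1r.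
set mu : R := k.+1%:R / k.+2%:R.
have mu01 : 0 <= mu <= 1.
  by rewrite divr_ge0 ?ler0n //= ler_pdivrMr ?ltr0n // mul1r ler_nat.
have mean_recr (c : nat -> R) :
    emp_mean k.+2 c = mu * emp_mean k.+1 c + (1 - mu) * c k.+1.
  rewrite /emp_mean big_ord_recr /= /mu -natr1.
  have k0 : 0 <= k%:R :> R := ler0n R k.
  by field; apply/andP; split; apply: lt0r_neq0; lra.
rewrite !mean_recr; apply: le_trans (lcvx _ _ _ _ _ mu01) _.
have [mu0 mu1] := andP mu01.
by rewrite lerD2r ler_wpM2l.
Qed.
End doubly_convex_loss.

Lemma measurable_fun_box_lower_semicontinuous (R : realType) d (T : measurableType d)
    (l : R -> R -> R) (a b : T -> R) :
  box_lower_semicontinuous l -> measurable_fun setT a -> measurable_fun setT b ->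
  measurable_fun setT (fun w => l (a w) (b w)).
Proof.
move=> lsc ma mb; apply: (measurability _ (RGenOInfty.measurableE R)).
move=> _ [_ [c ->] <-]; rewrite setTI preimage_itvoy.
pose centre (q : rat * rat * rat) := (ratr q.1.1 : R, ratr q.1.2 : R).
pose radius (q : rat * rat * rat) : R := ratr q.2.
pose good := [set q | 0 < radius q /\ forall u v, `|u - (centre q).1| < radius q ->
  `|v - (centre q).2| < radius q -> c < l u v].
pose box q := a @^-1` `](centre q).1 - radius q, (centre q).1 + radius q[ `&`
              b @^-1` `](centre q).2 - radius q, (centre q).2 + radius q[.
have -> : [set w | c < l (a w) (b w)] = \bigcup_(q in good) box q.
  apply/seteqP; split => [w /= clw|w [q [_ lq]]]; last first.
    by rewrite /box /= !in_itv /= => -[ha hb]; apply: lq; rewrite ltr_distl.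
  have [e e0 le] := lsc _ _ _ clw.
  have /rat_in_itvoo[r] : 0 < e / 2 by rewrite divr_gt0.
  rewrite in_itv /= => /andP[r0 re].
  have near_rat (z : R) : exists2 x : rat, z - ratr r < ratr x & ratr x < z + ratr r.
    have /rat_in_itvoo[x] : z - ratr r < z + ratr r by lra.
    by rewrite in_itv /= => /andP[]; exists x.
  have [[x xl xr] [y yl yr]] := (near_rat (a w), near_rat (b w)).
  exists (x, y, r); last by rewrite /box /= !in_itv /=; split; apply/andP; split; lra.
  split=> // u v; rewrite !ltr_distl => /andP[? ?] /andP[? ?].
  by apply: le; rewrite ltr_distl; apply/andP; split; lra.
rewrite bigcup_mkcond; apply: countable_bigcupT_measurable; first exact: countableP.
move=> q; case: ifPn => // _; apply: measurableI; rewrite -[X in measurable X]setTI.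
  by apply: ma => //; exact: measurable_itv.
by apply: mb => //; exact: measurable_itv.
Qed.

Lemma sum_cyclic_windows (R : pzSemiRingType) (k K : nat) (x : nat -> R) : (0 < K)%N ->
  \sum_(j < K) \sum_(i < k) x ((j + i) %% K)%N = k%:R * \sum_(j < K) x j.
Proof.
move=> K_gt0; rewrite exchange_big /= mulr_natl -[in RHS](card_ord k) -sumr_const.
apply: eq_bigr => i _.
pose shift (j : 'I_K) : 'I_K := Ordinal (ltn_pmod (j + i) K_gt0).
have shift_inj : injective shift.
  move=> j1 j2 /(congr1 val) /eqP /=.
  by rewrite eqn_modDr !modn_small // => /eqP /val_inj.
by rewrite [RHS](reindex_inj shift_inj).
Qed.

Lemma cyclic_window_inj {k K : nat} (j : nat) : (k <= K)%N ->
  injective (fun i : 'I_k => ((j + i) %% K)%N).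
Proof.
move=> le_kK i1 i2 /eqP; rewrite eqn_modDl !modn_small ?(leq_trans (ltn_ord _) le_kK) //.
by move/eqP/val_inj.
Qed.

Lemma emp_mean_cyclic_windows {R : realType} {k K : nat} (x : nat -> R) :
  (0 < k)%N -> (0 < K)%N ->
  emp_mean K x = emp_mean K (fun j => emp_mean k (fun i => x ((j + i) %% K)%N)).
Proof.
move=> k_gt0 K_gt0; rewrite /emp_mean -mulr_sumr sum_cyclic_windows //.
by rewrite mulKf // pnatr_eq0 -lt0n.
Qed.

Lemma EFin_emp_mean (R : realType) (K : nat) (g : nat -> R) :
  (emp_mean K g)%:E = ((K%:R^-1)%:E * \sum_(j < K) (g j)%:E)%E.
Proof. by rewrite /emp_mean EFinM sumEFin. Qed.

Lemma integrable_emp_mean {R : realType} {d} {T : measurableType d}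
    {mu : {measure set T -> \bar R}} {K : nat} {F : nat -> T -> R} :
  (forall j, (j < K)%N -> mu.-integrable setT (EFin \o F j)) ->
  mu.-integrable setT (fun w => (emp_mean K (fun j => F j w))%:E).
Proof.
move=> intF; under eq_fun do rewrite EFin_emp_mean.
apply: integrableZl => //; apply: (integrable_sum measurableT) => j _.
exact: intF.
Qed.

Lemma integral_emp_mean_const {R : realType} {d} {T : measurableType d}
    {mu : {measure set T -> \bar R}} {K : nat} {F : nat -> T -> R} {r : \bar R} :
  (0 < K)%N -> (forall j, (j < K)%N -> mu.-integrable setT (EFin \o F j)) ->
  (forall j, (j < K)%N -> \int[mu]_w (F j w)%:E = r)%E ->
  (\int[mu]_w (emp_mean K (fun j => F j w))%:E = r)%E.
Proof.
move=> K_gt0 intF intFr.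
have r_fin : r \is a fin_num.
  by rewrite -(intFr 0%N K_gt0); exact: integrable_fin_num (intF 0%N K_gt0).
under eq_integral do rewrite EFin_emp_mean.
have intS : mu.-integrable setT (fun w => \sum_(j < K) (F j w)%:E)%E.
  by apply: (integrable_sum measurableT) => j _; exact: intF.
rewrite integralZl // integral_sum //; last by move=> j; exact: intF.
under eq_bigr => j _ do rewrite intFr //.
rewrite sumr_const card_ord -(fineK r_fin).
(* the ring and the extended-real iterated additions agree only up to conversion *)
have -> : ((fine r)%:E *+ K)%R = ((fine r)%:E *+ K)%E by [].
by rewrite -EFin_natmul -EFinM -[fine r *+ K]mulr_natl mulKf // pnatr_eq0 -lt0n.
Qed.

Section tuple_rectangle.
Variables (dT : measure_display) (T : measurableType dT).

Definition tuple_rectangle {k : nat} (A : 'I_k -> set T) : set (k.-tuple T) :=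
  [set t | forall i, A i (tnth t i)].

Lemma measurable_tuple_rectangle k (A : 'I_k -> set T) :
  (forall i, measurable (A i)) -> measurable (tuple_rectangle A).
Proof.
move=> mA.
have -> : tuple_rectangle A =
    \big[setI/setT]_(i <- enum 'I_k) (@tnth k T ^~ i @^-1` A i).
  rewrite -bigcap_seq; apply/seteqP; split => [t At i _|t At i]; first exact: At.
  by apply: At; rewrite /= mem_enum.
apply: bigsetI_measurable => i _; rewrite -[X in measurable X]setTI.
exact: measurable_tnth.
Qed.

Definition tuple_rectangles k : set (set (k.-tuple T)) :=
  [set tuple_rectangle A | A in [set A | forall i, measurable (A i)]].

Lemma tuple_rectangles_generate k : measurable = <<s tuple_rectangles k.+1 >>.
Proof.
apply/seteqP; split; last first.
  apply: smallest_sub; first exact: sigma_algebra_measurable.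
  by move=> _ [A mA <-]; exact: measurable_tuple_rectangle.
apply: smallest_sub; first exact: smallest_sigma_algebra.
rewrite -bigcup_mkord_ord => _ [i _ [Y mY <-]].
apply: sub_sigma_algebra.
exists (fun j => if j == inord i then Y else setT) => [j|]; first by case: ifP.
apply/seteqP; split => t /=.
  by move=> At; have := At (inord i); rewrite eqxx.
by move=> [_ Yt] j; case: ifP => // /eqP ->.
Qed.

Lemma setI_closed_tuple_rectangles k : setI_closed (tuple_rectangles k).
Proof.
move=> _ _ [A1 mA1 <-] [A2 mA2 <-].
exists (fun i => A1 i `&` A2 i) => [i|]; first exact: measurableI.
by apply/seteqP; split => t /= At; [split => i; have [] := At i|case: At].
Qed.

End tuple_rectangle.
Arguments tuple_rectangle {dT T k}.
Arguments tuple_rectangles {dT} T k.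

Section iid_sample.
Context {R : realType} {dT : measure_display} {T : measurableType dT}
  {D : probability T R} {dO : measure_display} {Omega : measurableType dO}
  {P : probability Omega R} {Z : nat -> Omega -> T}.
Hypothesis iidZ : iid_draws P D Z.

Definition sample (k : nat) (s : 'I_k -> nat) (w : Omega) : k.-tuple T :=
  [tuple Z (s i) w | i < k].

Lemma measurable_sample k (s : 'I_k -> nat) : measurable_fun setT (sample k s).
Proof.
apply/measurable_fun_tnthP => i.
have -> : @tnth k T ^~ i \o sample k s = Z (s i).
  by apply: funext => w /=; rewrite tnth_mktuple.
by case: iidZ.
Qed.

HB.instance Definition _ k (s : 'I_k -> nat) :=
  isMeasurableFun.Build _ _ _ _ (sample k s) (measurable_sample k s).

Lemma prob_sample_rectangle k (s : 'I_k -> nat) (A : 'I_k -> set T) :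
  injective s -> (forall i, measurable (A i)) ->
  P (sample k s @^-1` tuple_rectangle A) = (\prod_(i <- enum 'I_k) D (A i))%E.
Proof.
move=> s_inj mA; have [_ [lawZ indepZ]] := iidZ.
pose B n := [set x | forall i, s i = n -> A i x].
have BA i : B (s i) = A i.
  by apply/seteqP; split => [x /(_ i erefl)|x Ax j /s_inj ->].
have -> : sample k s @^-1` tuple_rectangle A =
    \big[setI/setT]_(n <- [seq s i | i <- enum 'I_k]) (Z n @^-1` B n).
  rewrite -bigcap_seq; apply/seteqP; split => w /=.
    by move=> Aw _ /mapP[i _ ->]; rewrite /= BA; have := Aw i; rewrite tnth_mktuple.
  move=> Bw i; rewrite tnth_mktuple -BA; apply: Bw.
  by apply/mapP; exists i; rewrite ?mem_enum.
rewrite indepZ; last 2 first.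
- by rewrite map_inj_uniq ?enum_uniq.
- by move=> _ /mapP[i _ ->]; rewrite BA.
by rewrite big_map; apply: eq_bigr => i _; rewrite BA lawZ.
Qed.

Lemma distribution_sample_eq {k : nat} (s1 s2 : 'I_k.+1 -> nat)
    (B : set (k.+1.-tuple T)) :
  injective s1 -> injective s2 -> measurable B ->
  distribution P (sample k.+1 s1) B = distribution P (sample k.+1 s2) B.
Proof.
move=> s1_inj s2_inj.
apply: (measure_unique (tuple_rectangles T k.+1) (fun _ => setT)).
- exact: tuple_rectangles_generate.
- exact: setI_closed_tuple_rectangles.
- by move=> _; exists (fun _ => setT) => //; apply/seteqP; split.
- by rewrite bigcup_const.
- move=> _ [A mA <-].
  by rewrite [LHS](prob_sample_rectangle _ _ _ s1_inj mA)
    [RHS](prob_sample_rectangle _ _ _ s2_inj mA).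
- by move=> _; apply: (le_lt_trans (probability_le1 _ measurableT)); rewrite ltry.
Qed.

Lemma integral_sample_eq {k : nat} (s1 s2 : 'I_k.+1 -> nat)
    (g : k.+1.-tuple T -> \bar R) :
  injective s1 -> injective s2 -> measurable_fun setT g ->
  P.-integrable setT (g \o sample k.+1 s1) ->
  P.-integrable setT (g \o sample k.+1 s2) /\
  (\int[P]_w (g \o sample k.+1 s2) w = \int[P]_w (g \o sample k.+1 s1) w)%E.
Proof.
move=> s1_inj s2_inj mg int1.
have law B : measurable B -> distribution P (sample k.+1 s2) B =
    distribution P (sample k.+1 s1) B.
  exact: distribution_sample_eq.
have int2 : P.-integrable setT (g \o sample k.+1 s2).
  apply/integrableP; split; first exact: measurableT_comp (measurable_sample _ _).
  have mabsg : measurable_fun setT (fun t => `|g t|%E) by exact: measurableT_comp.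
  rewrite -(ge0_integral_distribution (sample k.+1 s2) mabsg) //.
  rewrite (eq_measure_integral (distribution P (sample k.+1 s1))); last first.
    by move=> B mB _; exact: law.
  by rewrite ge0_integral_distribution //; case/integrableP: int1.
split=> //.
rewrite -!integral_distribution //.
by apply: eq_measure_integral => B mB _; exact: law.
Qed.

End iid_sample.
Arguments sample {dT T dO Omega} Z k s w.

Section k_risk.
Context {R : realType} {dX : measure_display} {X : measurableType dX}
  {D : probability (X * R)%type R} {dO : measure_display}
  {Omega : measurableType dO} {P : probability Omega R}
  {Z : nat -> Omega -> (X * R)%type} {l : R -> R -> R} {f : X -> R}.
Hypotheses (iidZ : iid_draws P D Z) (lcvx : doubly_convex l)
  (mf : measurable_fun setT f).

Definition tuple_loss (k : nat) (t : k.-tuple (X * R)) : R :=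
  l (k%:R^-1 * \sum_(i < k) f (tnth t i).1) (k%:R^-1 * \sum_(i < k) (tnth t i).2).

Lemma measurable_tuple_loss k : measurable_fun setT (tuple_loss k).
Proof.
apply: measurable_fun_box_lower_semicontinuous;
  first exact: doubly_convex_lower_semicontinuous.
  apply: measurable_funM => //; apply: measurable_sum => i.
  by apply: measurableT_comp => //; apply: measurableT_comp => //; exact: measurable_tnth.
apply: measurable_funM => //; apply: measurable_sum => i.
by apply: measurableT_comp => //; exact: measurable_tnth.
Qed.

Lemma tuple_loss_sample k (s : 'I_k -> nat) (w : Omega) :
  tuple_loss k (sample Z k s w) = l (k%:R^-1 * \sum_(i < k) f (Z (s i) w).1)
                                   (k%:R^-1 * \sum_(i < k) (Z (s i) w).2).
Proof.
by rewrite /tuple_loss; congr l; congr (_ * _); apply: eq_bigr => i _;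
  rewrite tnth_mktuple.
Qed.

Lemma k_loss_sample k : k_loss Z l f k = tuple_loss k \o sample Z k val.
Proof. by apply: funext => w; rewrite /= tuple_loss_sample. Qed.

Lemma window_risk {k : nat} {s : 'I_k.+1 -> nat} : injective s ->
  P.-integrable setT (EFin \o k_loss Z l f k.+1) ->
  P.-integrable setT (EFin \o (tuple_loss k.+1 \o sample Z k.+1 s)) /\
  (\int[P]_w (tuple_loss k.+1 (sample Z k.+1 s w))%:E = k_risk P Z l f k.+1)%E.
Proof.
move=> s_inj int_k; rewrite k_loss_sample in int_k.
have mg : measurable_fun setT (EFin \o tuple_loss k.+1).
  by apply/measurable_EFinP; exact: measurable_tuple_loss.
have [int_s ->] := integral_sample_eq iidZ val s _ val_inj s_inj mg int_k.
by split=> //; rewrite /k_risk unlock k_loss_sample.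
Qed.

Lemma k_loss_le_window_mean k K (w : Omega) : (0 < k)%N -> (0 < K)%N ->
  k_loss Z l f K w <=
  emp_mean K (fun j => tuple_loss k (sample Z k (fun i => (j + i) %% K)%N w)).
Proof.
move=> k_gt0 K_gt0; rewrite /k_loss.
rewrite [X in l X _](emp_mean_cyclic_windows _ k_gt0 K_gt0).
rewrite [X in l _ X](emp_mean_cyclic_windows _ k_gt0 K_gt0).
case: K K_gt0 => // K _; apply: le_trans (doubly_convex_emp_mean lcvx _ _ _) _.
rewrite /emp_mean ler_wpM2l ?invr_ge0 ?ler0n //.
by apply: ler_sum => j _; rewrite tuple_loss_sample.
Qed.

End k_risk.
Arguments tuple_loss {R dX X} l f k t.

Theorem mainTheorem5 (R : realType) (dX : measure_display) (X : measurableType dX)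
    (D : probability (X * R)%type R)
    (dO : measure_display) (Omega : measurableType dO) (P : probability Omega R)
    (Z : nat -> Omega -> (X * R)%type)
    (l : R -> R -> R) (f : X -> R) (k k' : nat) :
  iid_draws P D Z ->
  doubly_convex l ->
  measurable_fun setT f ->
  (1 <= k)%N -> (k <= k')%N ->
  P.-integrable setT (EFin \o k_loss Z l f k) ->
  P.-integrable setT (EFin \o k_loss Z l f k') ->
  (k_risk P Z l f k' <= k_risk P Z l f k)%E.
Proof.
move=> iidZ lcvx mf k_gt0 le_kk' int_k int_k'.
case: k k_gt0 le_kk' int_k => // k _ le_kk' int_k.
have k'_gt0 : (0 < k')%N := leq_trans (ltn0Sn k) le_kk'.
have risk_window j :=
  window_risk iidZ lcvx mf (cyclic_window_inj j le_kk') int_k.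
pose F j w := tuple_loss l f k.+1 (sample Z k.+1 (fun i => (j + i) %% k')%N w).
have int_F j : (j < k')%N -> P.-integrable setT (EFin \o F j).
  by move=> _; case: (risk_window j).
have E_F j : (j < k')%N -> (\int[P]_w (F j w)%:E = k_risk P Z l f k.+1)%E.
  by move=> _; case: (risk_window j).
rewrite -(integral_emp_mean_const k'_gt0 int_F E_F) /k_risk unlock.
apply: le_integral => //; first exact: integrable_emp_mean.
by move=> w _; rewrite lee_fin; exact: k_loss_le_window_mean.
Qed.
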